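(* Let $k$ be a field, $I$ a directed set, and $(X_i)_{i\in I}$ an inverse system (indexed by $I$, with $k$-morphisms as transition maps) of irreducible affine $k$-schemes, each $X_i$ of finite type over $k$. Let $X = \varprojlim_{i\in I} X_i$ with natural morphisms $\pi_i : X\to X_i$, and assume that $X$ is irreducible, that $X_{\mathrm{red}}$ is of finite type over $k$, and that $\dim(X) = \dim(X_i)$ for all $i\in I$. Then there exists a cofinal subset $J\subset I$ such that for every $j\in J$ the induced morphism $X_{\mathrm{red}} \to (X_j)_{\mathrm{red}}$ is an isomorphism.
   Context: $\dim$ denotes Krull dimension of the underlying topological space; $Y_{\mathrm{red}}$ denotes the reduced closed subscheme of a scheme $Y$ with the same underlying space. *)

(* Affine k-schemes are encoded through their coordinate
   rings (anti-equivalence Spec). *)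
From HB Require Import structures.
From mathcomp Require Import all_boot all_order all_algebra.
Set Implicit Arguments. Unset Strict Implicit. Unset Printing Implicit Defensive.
Import GRing.Theory.
Local Open Scope ring_scope.

(* k-algebra homomorphisms = k-morphisms of affine k-schemes (reversed) *)
Definition kmorph (k : fieldType) (A B : comAlgType k) (f : A -> B) : Prop :=
  (forall a b, f (a + b) = f a + f b) /\ (forall a b, f (a * b) = f a * f b) /\
  f 1 = 1 /\ (forall (c : k) a, f (c *: a) = c *: f a).

Definition directed (I : Type) (le : I -> I -> Prop) : Prop :=
  inhabited I /\ (forall i, le i i) /\ (forall i j l, le i j -> le j l -> le i l) /\
  (forall i j, exists l, le i l /\ le j l).

(* an inverse system of affine k-schemes Spec (A i) over (I, le):
   for i <= j the transition map X_j -> X_i is Spec of f i j : A i -> A j *)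
Definition dir_system (k : fieldType) (I : Type) (le : I -> I -> Prop)
  (A : I -> comAlgType k) (f : forall i j, le i j -> A i -> A j) : Prop :=
  (forall i j (h : le i j), kmorph (f i j h)) /\
  (forall i (h : le i i) x, f i i h x = x) /\
  (forall i j l (h1 : le i j) (h2 : le j l) (h3 : le i l) x,
      f j l h2 (f i j h1 x) = f i l h3 x).

Definition cocone (k : fieldType) (I : Type) (le : I -> I -> Prop)
  (A : I -> comAlgType k) (f : forall i j, le i j -> A i -> A j)
  (C : comAlgType k) (psi : forall i, A i -> C) : Prop :=
  (forall i, kmorph (psi i)) /\
  (forall i j (h : le i j) x, psi j (f i j h x) = psi i x).

(* (B, phi) is the colimit of the system of k-algebras, i.e.
   Spec B = lim_i Spec (A i) with pi_i = Spec (phi i) *)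
Definition is_colimit (k : fieldType) (I : Type) (le : I -> I -> Prop)
  (A : I -> comAlgType k) (f : forall i j, le i j -> A i -> A j)
  (B : comAlgType k) (phi : forall i, A i -> B) : Prop :=
  cocone f phi /\
  forall (C : comAlgType k) (psi : forall i, A i -> C), cocone f psi ->
    (exists u : B -> C, kmorph u /\ forall i x, u (phi i x) = psi i x) /\
    (forall u v : B -> C, kmorph u -> kmorph v ->
       (forall i x, u (phi i x) = psi i x) -> (forall i x, v (phi i x) = psi i x) ->
       forall b, u b = v b).

Definition nilpotent (k : fieldType) (A : comAlgType k) (a : A) : Prop :=
  exists n : nat, a ^+ n = 0.

(* Spec A is irreducible iff the nilradical of A is a prime ideal *)
Definition spec_irreducible (k : fieldType) (A : comAlgType k) : Prop :=
  ~ nilpotent (1 : A) /\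
  forall a b : A, nilpotent (a * b) -> nilpotent a \/ nilpotent b.

Definition subalg (k : fieldType) (A : comAlgType k) (S : A -> Prop) : Prop :=
  S 1 /\ (forall a b, S a -> S b -> S (a + b)) /\
  (forall a b, S a -> S b -> S (a * b)) /\ (forall (c : k) a, S a -> S (c *: a)).

Definition generated (k : fieldType) (A : comAlgType k) (s : seq A) (x : A) : Prop :=
  forall S : A -> Prop, subalg S -> (forall y, y \in s -> S y) -> S x.

Definition finite_type (k : fieldType) (A : comAlgType k) : Prop :=
  exists s : seq A, forall x, generated s x.

(* (Spec A)_red = Spec (A / nil A) of finite type over k:
   A / nil(A) is generated by the classes of finitely many elements *)
Definition red_finite_type (k : fieldType) (A : comAlgType k) : Prop :=
  exists s : seq A, forall x, exists y, generated s y /\ nilpotent (x - y).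

Definition prime_ideal (k : fieldType) (A : comAlgType k) (P : A -> Prop) : Prop :=
  P 0 /\ (forall a b, P a -> P b -> P (a + b)) /\ (forall a b, P b -> P (a * b)) /\
  ~ P 1 /\ (forall a b, P (a * b) -> P a \/ P b).

(* Spec A has a chain of irreducible closed subsets of length n, i.e.
   there is a chain p_0 ⊊ p_1 ⊊ ... ⊊ p_n of prime ideals *)
Definition has_chain (k : fieldType) (A : comAlgType k) (n : nat) : Prop :=
  exists p : nat -> A -> Prop,
    (forall m, (m <= n)%N -> prime_ideal (p m)) /\
    (forall m, (m < n)%N ->
       (forall a, p m a -> p m.+1 a) /\ exists a, p m.+1 a /\ ~ p m a).

(* dim Spec A = dim Spec B (in N ∪ {∞}) *)
Definition same_dim (k : fieldType) (A B : comAlgType k) : Prop :=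
  forall n, has_chain A n <-> has_chain B n.

(* the morphism (Spec B)_red -> (Spec A)_red induced by g : A -> B is an
   isomorphism, i.e. A/nil(A) -> B/nil(B) induced by g is bijective *)
Definition red_iso (k : fieldType) (A B : comAlgType k) (g : A -> B) : Prop :=
  (forall b, exists a, nilpotent (b - g a)) /\
  (forall a, nilpotent (g a) -> nilpotent a).

From HB Require Import structures.
From mathcomp Require Import all_boot all_order all_algebra.
From mathcomp Require Import zify.
From Stdlib Require Import Classical.
From Stdlib Require ClassicalDescription.

(* B is the union of the images of the A_i, so the finitely many generators of B
   modulo its nilradical all come from one A_i0, and phi_j is surjective modulo
   nilpotents for every j >= i0.  If some non-nilpotent a in A_j had nilpotent
   image, then the nilradical of A_j (prime, as X_j is irreducible) would lie
   strictly below the preimage of every prime of B, so each chain of primes of B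
   would lift to a longer chain in A_j.  As dim B = dim A_j, A_j would then have
   chains of every length, whereas a k-algebra generated by n elements has none
   of length n + 1. *)

Set Implicit Arguments. Unset Strict Implicit. Unset Printing Implicit Defensive.
Import GRing.Theory.
Local Open Scope ring_scope.

Section Nilpotent.
Variables (k : fieldType) (R : comAlgType k).
Implicit Types a b : R.

Lemma nilpotent0 : nilpotent (0 : R).
Proof. by exists 1%N; rewrite expr1. Qed.

Lemma nilpotentD a b : nilpotent a -> nilpotent b -> nilpotent (a + b).
Proof.
move=> [m am0] [n bn0]; exists (m + n)%N; rewrite exprDn big1 // => i _.
have [ni|lt_in] := leqP n i; first by rewrite -(subnKC ni) exprD bn0 mul0r mulr0 mul0rn.
have mi : (m <= m + n - i)%N by lia.
by rewrite -(subnKC mi) exprD am0 !mul0r mul0rn.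
Qed.

Lemma nilpotentMl a b : nilpotent b -> nilpotent (a * b).
Proof. by move=> [n bn0]; exists n; rewrite exprMn bn0 mulr0. Qed.

Lemma nilpotent_prime_ideal : spec_irreducible R -> prime_ideal (@nilpotent k R).
Proof.
move=> [nil1 nilM]; split; first exact: nilpotent0.
by split; [exact: nilpotentD | split; [exact: nilpotentMl | split]].
Qed.
End Nilpotent.

Section PrimeIdeal.
Variables (k : fieldType) (R : comAlgType k) (P : R -> Prop).
Hypothesis P_prime : prime_ideal P.
Implicit Types a b : R.

Lemma prime_ideal0 : P 0.
Proof. by case: P_prime. Qed.

Lemma prime_idealD a b : P a -> P b -> P (a + b).
Proof. by case: P_prime => _ [PD _]; apply: PD. Qed.

Lemma prime_idealMl a b : P b -> P (a * b).
Proof. by case: P_prime => _ [_ [PM _]]; apply: PM. Qed.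

Lemma prime_ideal1 : ~ P 1.
Proof. by case: P_prime => _ [_ [_ [P1 _]]]. Qed.

Lemma prime_idealM a b : P (a * b) -> P a \/ P b.
Proof. by case: P_prime => _ [_ [_ [_ PM]]]; apply: PM. Qed.

Lemma prime_ideal_notM a b : ~ P a -> ~ P b -> ~ P (a * b).
Proof. by move=> Pa Pb /prime_idealM []. Qed.

Lemma prime_idealB a b : P a -> P b -> P (a - b).
Proof. by move=> Pa Pb; rewrite -mulN1r; apply/prime_idealD/prime_idealMl. Qed.

Lemma prime_idealX a n : P (a ^+ n) -> P a.
Proof.
elim: n => [|n IHn]; first by rewrite expr0 => /prime_ideal1.
by rewrite exprS => /prime_idealM [] // /IHn.
Qed.

Lemma prime_ideal_nilpotent a : nilpotent a -> P a.
Proof. by move=> [n an0]; apply: (@prime_idealX a n); rewrite an0; exact: prime_ideal0. Qed.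

Lemma prime_idealZ1 (c : k) : c != 0 -> ~ P (c *: 1).
Proof.
move=> c0 Pc; apply: prime_ideal1.
have -> : (1 : R) = (c^-1 *: 1) * (c *: 1).
  by rewrite -scalerAl mul1r scalerA mulVf // scale1r.
exact: prime_idealMl.
Qed.
End PrimeIdeal.

Section KMorphism.
Variables (k : fieldType) (A B : comAlgType k) (g : A -> B).
Hypothesis g_kmorph : kmorph g.

Lemma kmorph0 : g 0 = 0.
Proof. by case: g_kmorph => gD _; apply: (addrI (g 0)); rewrite -gD !addr0. Qed.

Lemma kmorphX a n : g (a ^+ n) = g a ^+ n.
Proof.
case: g_kmorph => _ [gM _]; elim: n => [|n IHn]; last by rewrite !exprS gM IHn.
by case: g_kmorph => _ [_ [g1 _]]; rewrite !expr0.
Qed.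

Lemma kmorph_comp (C : comAlgType k) (h : B -> C) :
  kmorph h -> kmorph (fun a => h (g a)).
Proof.
case: g_kmorph => gD [gM [g1 gZ]] [hD [hM [h1 hZ]]].
by split; [|split; [|split]] => *; rewrite ?(gD, gM, g1, gZ, hD, hM, h1, hZ).
Qed.

Lemma kmorph_nilpotent a : nilpotent a -> nilpotent (g a).
Proof. by move=> [n an0]; exists n; rewrite -kmorphX an0 kmorph0. Qed.

Lemma prime_ideal_preim (P : B -> Prop) : prime_ideal P -> prime_ideal (fun a => P (g a)).
Proof.
move=> P_prime; case: g_kmorph => gD [gM [g1 _]].
split; first by rewrite kmorph0; apply: prime_ideal0.
split; first by move=> a b Pa Pb; rewrite gD; apply: prime_idealD.
split; first by move=> a b Pb; rewrite gM; apply: prime_idealMl.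
split; first by rewrite g1; apply: prime_ideal1.
by move=> a b; rewrite gM; apply: prime_idealM.
Qed.

(* Below the preimages of a chain of primes of B, put the nilradical of A: it is
   prime, and strictly smaller because it misses [a]. *)
Lemma has_chain_lift a n : spec_irreducible A ->
  (forall b, exists a, nilpotent (b - g a)) -> nilpotent (g a) -> ~ nilpotent a ->
  has_chain B n -> has_chain A n.+1.
Proof.
move=> A_irr g_surj nil_ga nil_a [p [p_prime p_chain]].
have nil_p m : (m <= n)%N -> forall b, nilpotent b -> p m b.
  by move=> mn b; apply: prime_ideal_nilpotent; apply: p_prime.
exists (fun m x => if m is m'.+1 then p m' (g x) else nilpotent x); split.
  by case=> [_|m mn]; [exact: nilpotent_prime_ideal | apply/prime_ideal_preim/p_prime].
case=> [_|m mn].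
  split; first by move=> x /kmorph_nilpotent; apply: nil_p.
  by exists a; split => //; apply: nil_p.
have [p_sub [b [pb npb]]] := p_chain m mn.
split; first by move=> x; apply: p_sub.
have [a' nil_ba'] := g_surj b; exists a'; split.
  rewrite -[g a'](subKr b); apply: (prime_idealB (p_prime m.+1 mn)) => //.
  exact: nil_p.
move=> pa'; apply: npb; rewrite -(subrK (g a') b).
by apply: (prime_idealD (p_prime m (ltnW mn))) => //; apply: (nil_p m (ltnW mn)).
Qed.
End KMorphism.

Section Colimit.
Local Unset Implicit Arguments.
Variables (k : fieldType) (I : Type) (le : I -> I -> Prop)
  (A : I -> comAlgType k) (f : forall i j, le i j -> A i -> A j)
  (B : comAlgType k) (phi : forall i, A i -> B).
Local Set Implicit Arguments.
Hypotheses (le_directed : directed le) (phi_colim : is_colimit f phi).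

Definition phi_image j (b : B) : Prop := exists a, b = phi j a.

Lemma colimit_kmorph i : kmorph (phi i).
Proof. by case: phi_colim => [[phiM _] _]. Qed.

Lemma phi_image_subalg j : subalg (phi_image j).
Proof.
case: (colimit_kmorph j) => phiD [phiM [phi1 phiZ]].
split; first by exists 1; rewrite phi1.
split; first by move=> _ _ [a ->] [a' ->]; exists (a + a'); rewrite phiD.
split; first by move=> _ _ [a ->] [a' ->]; exists (a * a'); rewrite phiM.
by move=> c _ [a ->]; exists (c *: a); rewrite phiZ.
Qed.

Lemma phi_imageW i j b : le i j -> phi_image i b -> phi_image j b.
Proof.
case: phi_colim => [[_ phi_f] _] ij [a ->].
by exists (f i j ij a); rewrite phi_f.
Qed.

Lemma phi_image2 i j b c : phi_image i b -> phi_image j c ->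
  exists l, phi_image l b /\ phi_image l c.
Proof.
case: le_directed => _ [_ [_ le_ub]] ib jc; have [l [il jl]] := le_ub i j.
by exists l; split; [apply: phi_imageW ib | apply: phi_imageW jc].
Qed.

Definition colim_image : pred B := fun b =>
  if ClassicalDescription.excluded_middle_informative (exists i, phi_image i b)
  then true else false.

Lemma colim_imageP b : reflect (exists i, phi_image i b) (colim_image b).
Proof.
by rewrite /colim_image; case: ClassicalDescription.excluded_middle_informative; constructor.
Qed.

Lemma colim_image_closed : GRing.subsemialg_closed colim_image.
Proof.
have [[i0] _] := le_directed.
have closed2 (op : B -> B -> B) :
    (forall j b c, phi_image j b -> phi_image j c -> phi_image j (op b c)) ->
    {in colim_image &, forall b c, op b c \in colim_image}.
  move=> opP b c /colim_imageP [i ib] /colim_imageP [j jc]; apply/colim_imageP.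
  by have [l [lb lc]] := phi_image2 ib jc; exists l; apply: opP.
split.
- by apply/colim_imageP; exists i0; case: (phi_image_subalg i0).
- split; last by apply: closed2 => j; case: (phi_image_subalg j) => _ [].
  by apply/colim_imageP; exists i0, 0; rewrite (kmorph0 (colimit_kmorph i0)).
- move=> c b /colim_imageP [j jb]; apply/colim_imageP; exists j.
  by case: (phi_image_subalg j) => _ [_ [_ SZ]]; apply: SZ.
- by apply: closed2 => j; case: (phi_image_subalg j) => _ [_ []].
Qed.

Definition colim_sub := {b : B | colim_image b}.
HB.instance Definition _ := Choice.on colim_sub.
HB.instance Definition _ := [isSub of colim_sub for sval].
HB.instance Definition _ :=
  GRing.SubChoice_isSubAlgebra.Build k B colim_image colim_sub colim_image_closed.
HB.instance Definition _ := GRing.SubNzRing_isSubComNzRing.Build B colim_image colim_sub.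

Lemma kmorph_val : kmorph (val : colim_sub -> B).
Proof.
split; first exact: rmorphD.
split; first exact: rmorphM.
split; first exact: rmorph1.
by move=> c b; rewrite linearZ.
Qed.

Lemma kmorph_corestr (X : comAlgType k) (h : X -> colim_sub) :
  kmorph (fun x => val (h x)) -> kmorph h.
Proof.
move=> [hD [hM [h1 hZ]]].
split; first by move=> x y; apply: val_inj; rewrite hD rmorphD.
split; first by move=> x y; apply: val_inj; rewrite hM rmorphM.
split; first by apply: val_inj; rewrite h1 rmorph1.
by move=> c x; apply: val_inj; rewrite hZ linearZ.
Qed.

(* The phi_i factor through the subalgebra [colim_sub] of their images; uniqueness
   in the universal property then forces [colim_sub] to be all of B. *)
Lemma colim_imageT b : exists i, phi_image i b.
Proof.
have phi_colim_image i a : colim_image (phi i a) by apply/colim_imageP; exists i, a.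
pose psi i a : colim_sub := exist _ (phi i a) (phi_colim_image i a).
have psi_cocone : cocone f psi.
  case: phi_colim => [[_ phi_f] _]; split => [i|i j ij a].
    exact/kmorph_corestr/colimit_kmorph.
  by apply: val_inj; rewrite /= phi_f.
have [[u [u_kmorph u_psi]] _] := phi_colim.2 _ _ psi_cocone.
have [_ phi_uniq] := phi_colim.2 _ _ phi_colim.1.
have val_u_kmorph := kmorph_comp u_kmorph kmorph_val.
have -> : b = val (u b).
  apply: (phi_uniq (fun b => b) _ _ val_u_kmorph) => // i a.
  by rewrite u_psi.
exact/colim_imageP/valP.
Qed.

Lemma phi_image_seq (s : seq B) : exists i, forall y, y \in s -> phi_image i y.
Proof.
elim: s => [|y s [i si]]; first by have [[i0] _] := le_directed; exists i0.
have [j jy] := colim_imageT y.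
case: le_directed => _ [_ [_ le_ub]]; have [l [il jl]] := le_ub i j.
exists l => z; rewrite inE => /predU1P [->|zs]; first exact: phi_imageW jy.
exact: phi_imageW (si z zs).
Qed.

Lemma colimit_red_surj : red_finite_type B ->
  exists i0, forall j, le i0 j -> forall b, exists a, nilpotent (b - phi j a).
Proof.
move=> [s s_gen]; have [i0 si0] := phi_image_seq s.
exists i0 => j i0j b; have [y [gen_y nil_by]] := s_gen b.
have [a ya] : phi_image j y.
  by apply: gen_y (phi_image_subalg j) _ => z zs; apply: phi_imageW (si0 z zs).
by exists a; rewrite -ya.
Qed.

End Colimit.

Fixpoint box (r d : nat) : seq (seq nat) :=
  if r is r'.+1 then [seq m :: t | m <- iota 0 d.+1, t <- box r' d] else [:: [::]].

Lemma boxS r d : box r.+1 d = [seq m :: t | m <- iota 0 d.+1, t <- box r d].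
Proof. by []. Qed.

Lemma mem_box r d e : (e \in box r d) = (size e == r) && all (fun m => m <= d)%N e.
Proof.
elim: r e => [|r IHr] e; first by case: e => [|m e]; rewrite mem_seq1.
apply/allpairsP/idP => [[[m t] [md tr ->]]|].
  by move: md tr; rewrite IHr mem_iota add0n ltnS /= => -> /andP [/eqP -> ->]; rewrite eqxx.
case: e => [|m e] // /andP [sz /andP [md ed]].
by exists (m, e); rewrite mem_iota ltnS md IHr -eqSS sz.
Qed.

Lemma box_uniq r d : uniq (box r d).
Proof.
elim: r => [|r IHr] //; apply: allpairs_uniq => //; first exact: iota_uniq.
by move=> [m t] [m' t'] _ _ /= [-> ->].
Qed.

Lemma size_box r d : size (box r d) = (d.+1 ^ r)%N.
Proof. by elim: r => [|r IHr] //; rewrite boxS size_allpairs size_iota IHr expnS. Qed.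

Lemma box_leq r D D' e : (D <= D')%N -> e \in box r D -> e \in box r D'.
Proof.
rewrite !mem_box => DD' /andP [-> eD] /=.
by apply/allP => m /(allP eD) mD; apply: leq_trans DD'.
Qed.

Fixpoint add_exps (e e' : seq nat) : seq nat :=
  if (e, e') is (m :: e1, m' :: e1') then (m + m')%N :: add_exps e1 e1' else [::].

Lemma add_exps_box r D D' e e' :
  e \in box r D -> e' \in box r D' -> add_exps e e' \in box r (D + D').
Proof.
elim: e e' r => [|m e IHe] [|m' e'] r; rewrite !mem_box //=.
case: r => // r; rewrite !eqSS => /andP [sz /andP [mD eD]] /andP [sz' /andP [mD' eD']].
have := IHe e' r; rewrite !mem_box sz sz' eD eD' => /(_ isT isT) /andP [-> ->].
by rewrite leq_add.
Qed.

Section Monomials.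
Variables (k : fieldType) (R : comAlgType k).
Implicit Types (a : R) (x s : seq R) (e : seq nat).

Fixpoint monomial x e : R :=
  if (x, e) is (a :: x', m :: e') then a ^+ m * monomial x' e' else 1.

Definition poly_eval (c : seq nat -> k) x d : R :=
  \sum_(e <- box (size x) d) c e *: monomial x e.

Lemma poly_eval_cons c a x d :
  poly_eval c (a :: x) d =
  \sum_(m <- iota 0 d.+1) a ^+ m * poly_eval (fun t => c (m :: t)) x d.
Proof.
rewrite /poly_eval [size _]/= boxS big_allpairs_dep; apply: eq_bigr => m _.
by rewrite mulr_sumr; apply: eq_bigr => t _; rewrite scalerAr.
Qed.

Lemma horner_rec_sum a (G : nat -> R) j n :
  \sum_(m <- iota j n) a ^+ m * G m = a ^+ j * horner_rec [seq G m | m <- iota j n] a.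
Proof.
elim: n j => [|n IHn] j /=; first by rewrite big_nil mulr0.
by rewrite big_cons IHn exprSr mulrDr addrC -mulrA [a * _]mulrC.
Qed.

Lemma horner_rec_notin (P Q : R -> Prop) a gs :
  prime_ideal P -> prime_ideal Q -> (forall b, P b -> Q b) -> Q a -> ~ P a ->
  (forall g, g \in gs -> g = 0 \/ ~ Q g) -> (exists2 g, g \in gs & ~ Q g) ->
  ~ P (horner_rec gs a).
Proof.
move=> P_prime Q_prime PQ Qa Pa; elim: gs => [|g gs IHgs] gs_nz [g' g'gs Qg'] //=.
set h := horner_rec gs a.
have notQ_g : ~ Q g -> ~ P (h * a + g).
  move=> Qg /PQ Qhg; apply: Qg; rewrite -[g](addKr (h * a)) addrC.
  by apply: prime_idealB => //; apply: prime_idealMl.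
move: g'gs Qg'; rewrite inE => /predU1P [-> Qg|g'gs Qg']; first exact: notQ_g.
have [g0|] := gs_nz g (mem_head _ _); last exact: notQ_g.
rewrite g0 addr0; apply: prime_ideal_notM => //; apply: IHgs; last by exists g'.
by move=> g'' g''gs; apply: gs_nz; rewrite inE g''gs orbT.
Qed.

(* The witnesses [x_i] of a strict chain [q_0 < ... < q_n] of primes are
   algebraically independent modulo [q_0]. *)
Lemma poly_eval_chain_notin d x (q : nat -> R -> Prop) c :
  (forall i, (i <= size x)%N -> prime_ideal (q i)) ->
  (forall i, (i < size x)%N ->
     (forall b, q i b -> q i.+1 b) /\ q i.+1 (nth 0 x i) /\ ~ q i (nth 0 x i)) ->
  (exists2 e, e \in box (size x) d & c e != 0) -> ~ q 0%N (poly_eval c x d).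
Proof.
elim: x q c => [|a x IHx] q c q_prime q_chain [e ebox ce].
  move: ebox; rewrite mem_seq1 => /eqP ee; subst e.
  rewrite /poly_eval big_seq1; exact: (prime_idealZ1 (q_prime 0%N isT) ce).
pose G m := poly_eval (fun t => c (m :: t)) x d.
rewrite poly_eval_cons (horner_rec_sum a G 0 d.+1) expr0 mul1r.
have [q01 [q1a q0a]] := q_chain 0%N isT.
have G_notin m : (exists2 t, t \in box (size x) d & c (m :: t) != 0) -> ~ q 1%N (G m).
  by apply: (IHx (fun i => q i.+1)) => [i|i];
    [exact: (q_prime i.+1) | exact: (q_chain i.+1)].
apply: (horner_rec_notin (Q := q 1%N)) => //; try exact: q_prime.
- move=> _ /mapP [m _ ->].
  have [/hasP [t tbox ct]|/hasPn c0] :=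
    boolP (has (fun t => c (m :: t) != 0) (box (size x) d)).
    by right; apply: G_notin; exists t.
  left; rewrite /G /poly_eval big1_seq // => t /andP [_ tbox].
  by move/negPn/eqP: (c0 t tbox) => ->; rewrite scale0r.
- move: ebox ce => /allpairsP [[m t] [md tbox ->]] ct.
  by exists (G m); [apply: map_f | apply: G_notin; exists t].
Qed.
End Monomials.

Section MonomialSpan.
Variables (k : fieldType) (R : comAlgType k).
Implicit Types (x y : R) (s : seq R).

Lemma monomial_add_exps s e e' : size e = size s -> size e' = size s ->
  monomial s e * monomial s e' = monomial s (add_exps e e').
Proof.
elim: s e e' => [|a s IHs] [|m e] [|m' e'] //=; first by rewrite mulr1.
by move=> [sz] [sz']; rewrite -IHs // exprD mulrACA.
Qed.

Lemma monomial_nseq0 s : monomial s (nseq (size s) 0%N) = 1.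
Proof. by elim: s => //= a s ->; rewrite expr0 mulr1. Qed.

Lemma monomial_nth s i : (i < size s)%N ->
  exists2 e, e \in box (size s) 1 & monomial s e = nth 0 s i.
Proof.
elim: s i => [|a s IHs] [|i] // ltis.
  exists (1%N :: nseq (size s) 0%N); last by rewrite /= monomial_nseq0 expr1 mulr1.
  by rewrite mem_box /= size_nseq eqxx /=; apply/allP => m /nseqP [->].
have [e ebox se] := IHs i ltis; exists (0%N :: e); last by rewrite /= expr0 mul1r se.
by move: ebox; rewrite !mem_box /= eqSS.
Qed.

(* [x] is a k-linear combination of monomials in [s] of degree at most [D] in
   each variable; the combination is kept as a list of (coefficient, exponent)
   pairs, which makes closure under products easy. *)
Definition in_mono_span s D x := exists l : seq (k * seq nat),
  all (fun p => p.2 \in box (size s) D) l /\ x = \sum_(p <- l) p.1 *: monomial s p.2.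

Lemma in_mono_spanW s D D' x : (D <= D')%N -> in_mono_span s D x -> in_mono_span s D' x.
Proof.
move=> DD' [l [lD ->]]; exists l; split => //.
by apply/allP => p /(allP lD); apply: box_leq.
Qed.

Lemma in_mono_spanD s D x y :
  in_mono_span s D x -> in_mono_span s D y -> in_mono_span s D (x + y).
Proof.
by move=> [l [lD ->]] [l' [l'D ->]]; exists (l ++ l'); rewrite all_cat lD l'D big_cat.
Qed.

Lemma in_mono_spanZ s D (c : k) x : in_mono_span s D x -> in_mono_span s D (c *: x).
Proof.
move=> [l [lD ->]]; exists [seq (c * p.1, p.2) | p <- l]; split; first by rewrite all_map.
by rewrite big_map scaler_sumr; apply: eq_bigr => p _; rewrite scalerA.
Qed.

Lemma in_mono_spanM s D D' x y :
  in_mono_span s D x -> in_mono_span s D' y -> in_mono_span s (D + D') (x * y).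
Proof.
move=> [l [lD ->]] [l' [l'D ->]].
exists [seq (p.1 * p'.1, add_exps p.2 p'.2) | p <- l, p' <- l']; split.
  apply/allP => _ /allpairsP [[p p'] [pl p'l' ->]] /=.
  by apply: add_exps_box; [apply: (allP lD) | apply: (allP l'D)].
rewrite big_allpairs_dep mulr_suml; apply: eq_big_seq => p pl.
rewrite mulr_sumr; apply: eq_big_seq => p' p'l'.
have szp : size p.2 = size s by move: (allP lD p pl); rewrite mem_box => /andP [/eqP].
have szp' : size p'.2 = size s by move: (allP l'D p' p'l'); rewrite mem_box => /andP [/eqP].
by rewrite -scalerAl -scalerAr scalerA monomial_add_exps.
Qed.

Lemma in_mono_span1 s : in_mono_span s 0 1.
Proof.
exists [:: (1, nseq (size s) 0%N)]; split; last by rewrite big_seq1 scale1r monomial_nseq0.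
by rewrite /= andbT mem_box size_nseq eqxx; apply/allP => m /nseqP [->].
Qed.

Lemma in_mono_span_mem s y : y \in s -> in_mono_span s 1 y.
Proof.
move=> ys; have /monomial_nth [e ebox se] : (index y s < size s)%N by rewrite index_mem.
exists [:: (1, e)]; split; first by rewrite /= ebox.
by rewrite big_seq1 scale1r se nth_index.
Qed.

Lemma in_mono_spanX s E y m : in_mono_span s E y -> in_mono_span s (m * E) (y ^+ m).
Proof.
move=> yE; elim: m => [|m IHm]; first by rewrite expr0 mul0n; apply: in_mono_span1.
by rewrite exprS mulSn; apply: in_mono_spanM.
Qed.

Lemma generated_in_mono_span s x : generated s x -> exists D, in_mono_span s D x.
Proof.
move=> gen_x; apply: (gen_x (fun z => exists D, in_mono_span s D z)).
  2: by move=> y ys; exists 1%N; apply: in_mono_span_mem.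
split; first by exists 0%N; apply: in_mono_span1.
split.
  move=> a b [D aD] [D' bD']; exists (maxn D D').
  by apply: in_mono_spanD; [apply: in_mono_spanW aD | apply: in_mono_spanW bD'];
    rewrite ?leq_maxl ?leq_maxr.
split; first by move=> a b [D aD] [D' bD']; exists (D + D')%N; apply: in_mono_spanM.
by move=> c a [D aD]; exists D; apply: in_mono_spanZ.
Qed.

Lemma in_mono_span_seq s (y : seq R) : (forall z, z \in y -> exists D, in_mono_span s D z) ->
  exists E, forall z, z \in y -> in_mono_span s E z.
Proof.
elim: y => [|a y IHy] yD; first by exists 0%N.
have [E yE] := IHy (fun z zy => yD z (mem_behead (s := a :: y) zy)).
have [D aD] := yD a (mem_head _ _).
exists (maxn E D) => z; rewrite inE => /predU1P [->|zy].
  by apply: in_mono_spanW aD; apply: leq_maxr.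
by apply: in_mono_spanW (yE z zy); apply: leq_maxl.
Qed.

Lemma in_mono_span_monomial s E d (y : seq R) t :
  (forall z, z \in y -> in_mono_span s E z) ->
  t \in box (size y) d -> in_mono_span s (size y * (d * E)) (monomial y t).
Proof.
elim: y t => [|a y IHy] t yE; first by rewrite mem_seq1 => /eqP ->; apply: in_mono_span1.
rewrite mem_box; case: t => [|m t] //= /andP [sz /andP [md td]].
rewrite mulSn; apply: in_mono_spanM.
  apply: (@in_mono_spanW _ (m * E)); first by rewrite leq_mul2r md orbT.
  by apply/in_mono_spanX/yE; rewrite mem_head.
by apply: IHy => [z zy|]; [apply: yE; rewrite inE zy orbT | rewrite mem_box -eqSS sz].
Qed.

Lemma in_mono_span_poly_eval s D x :
  in_mono_span s D x -> exists c, x = poly_eval c s D.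
Proof.
move=> [l [lD ->]]; exists (fun e => \sum_(p <- l | p.2 == e) p.1).
rewrite /poly_eval (eq_bigr (fun e => \sum_(p <- l | p.2 == e) p.1 *: monomial s e));
  last by move=> e _; rewrite scaler_suml.
rewrite (exchange_big_dep xpredT) //=; apply: eq_big_seq => p pl.
rewrite -big_filter (@eq_filter _ _ (pred1 p.2)) => [|e]; last exact: eq_sym.
by rewrite filter_pred1_uniq ?box_uniq ?(allP lD) // big_seq1.
Qed.
End MonomialSpan.

Lemma rowV_dependent (k : fieldType) m n (M : 'M[k]_(m, n)) : (n < m)%N ->
  exists2 u : 'rV_m, u != 0 & u *m M = 0.
Proof.
move=> nm; have : ~~ row_free M.
  by rewrite /row_free neq_ltn (leq_ltn_trans (rank_leq_col M) nm).
by rewrite -kermx_eq0 => /rowV0Pn [u /sub_kermxP uM u0]; exists u.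
Qed.

Lemma lin_dependent (k : fieldType) (R : comAlgType k) (X : eqType)
    (L ws : seq X) (v w : X -> R) :
  uniq L -> (size ws < size L)%N ->
  (forall e, e \in L -> exists c : X -> k, v e = \sum_(e' <- ws) c e' *: w e') ->
  exists c : X -> k, (exists2 e, e \in L & c e != 0) /\ \sum_(e <- L) c e *: v e = 0.
Proof.
move=> L_uniq ltLws vw.
pose L_ := tnth (in_tuple L); pose ws_ := tnth (in_tuple ws).
have [C vC] := fin_all_exists (fun i => vw (L_ i) (mem_tnth i (in_tuple L))).
have [u u0 uC] := rowV_dependent (\matrix_(i, j) C i (ws_ j)) ltLws.
pose c e := if insub (index e L) is Some i then u 0 i else 0.
have cL i : c (L_ i) = u 0 i.
  by rewrite /c /L_ (tnth_nth (tnth (in_tuple L) i)) index_uniq // valK.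
exists c; split.
  by have /rV0Pn [i ui] := u0; exists (L_ i); rewrite ?mem_tnth ?cL.
rewrite big_tnth; under eq_bigr => i _ do rewrite cL vC big_tnth scaler_sumr.
rewrite exchange_big big1 //= => j _.
have := congr1 (fun N : 'M_(1, size ws) => N 0 j) uC; rewrite !mxE => uCj.
rewrite -[RHS](scale0r (w (ws_ j))) -uCj scaler_suml; apply: eq_bigr => i _.
by rewrite mxE scalerA.
Qed.

Lemma box_count n E : exists d, ((n.+1 * (d * E)).+1 ^ n < d.+1 ^ n.+1)%N.
Proof.
pose K := (n.+1 * E).+1; exists (K ^ n)%N; set d := (K ^ n)%N.
have d_gt0 : (0 < d)%N by rewrite expn_gt0.
have le_dK : ((n.+1 * (d * E)).+1 <= d * K)%N by rewrite /K; nia.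
apply: (@leq_ltn_trans ((d * K) ^ n)%N).
  by case: (posnP n) => [->|n_gt0]; rewrite ?expn0 // leq_exp2r.
by rewrite expnMn -/d -expnSr ltn_exp2r.
Qed.

Lemma exists_seq_nth (T : Type) (x0 : T) (Q : nat -> T -> Prop) n :
  (forall i, (i < n)%N -> exists a, Q i a) ->
  exists y : seq T, size y = n /\ forall i, (i < n)%N -> Q i (nth x0 y i).
Proof.
elim: n => [|n IHn] Qex; first by exists [::].
have [y [szy Qy]] := IHn (fun i lt_in => Qex i (leqW lt_in)).
have [a Qa] := Qex n (ltnSn n).
exists (rcons y a); split => [|i]; first by rewrite size_rcons szy.
rewrite ltnS leq_eqVlt nth_rcons szy => /predU1P [->|lt_in]; first by rewrite ltnn eqxx.
by rewrite lt_in; apply: Qy.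
Qed.

(* Elements [y_i] witnessing a chain of length [n+1] are algebraically independent
   modulo its bottom prime, but the [(d+1)^(n+1)] monomials in them of degree at most
   [d] all lie in the span of the [(D+1)^n] monomials of bounded degree in the [n]
   generators, and for suitable [d] the second number is smaller. *)
Lemma generated_chain_bound (k : fieldType) (A : comAlgType k) (s : seq A) :
  (forall x, generated s x) -> ~ has_chain A (size s).+1.
Proof.
move=> s_gen [p [p_prime p_chain]]; set n := size s.
have [y [szy y_chain]] := @exists_seq_nth A 0 (fun i a => p i.+1 a /\ ~ p i a) n.+1
  (fun i lt_in => (p_chain i lt_in).2).
have [E yE] := in_mono_span_seq (y := y) (fun z _ => generated_in_mono_span (s_gen z)).
have [d count] := box_count n E.
set D := (size y * (d * E))%N.
have lt_box : (size (box n D) < size (box (size y) d))%N by rewrite !size_box /D szy.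
have y_span e : e \in box (size y) d ->
    exists c, monomial y e = \sum_(e' <- box n D) c e' *: monomial s e'.
  by move=> ebox; apply: in_mono_span_poly_eval (in_mono_span_monomial yE ebox).
have [c [c_nz c_dep]] := lin_dependent (box_uniq (size y) d) lt_box y_span.
apply: (poly_eval_chain_notin (q := p) _ _ c_nz) => [i|i|].
- by rewrite szy => ?; apply: p_prime.
- rewrite szy => lt_in; have [p_sub _] := p_chain i lt_in.
  by have [py npy] := y_chain i lt_in; split.
- by rewrite /poly_eval c_dep; apply: prime_ideal0 (p_prime 0%N isT).
Qed.

Lemma red_inj_of_same_dim (k : fieldType) (A B : comAlgType k) (g : A -> B) :
  kmorph g -> spec_irreducible A -> finite_type A -> same_dim B A ->
  (forall b, exists a, nilpotent (b - g a)) ->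
  forall a, nilpotent (g a) -> nilpotent a.
Proof.
move=> g_kmorph A_irr [s s_gen] dimBA g_surj a nil_ga.
have [//|nil_a] := classic (nilpotent a); exfalso.
have chains n : has_chain A n.
  elim: n => [|n IHn].
    by exists (fun _ => @nilpotent k A); split=> [m _|//]; apply: nilpotent_prime_ideal.
  by apply: (has_chain_lift g_kmorph A_irr g_surj nil_ga nil_a); apply/dimBA.
exact: generated_chain_bound s_gen (chains _).
Qed.

Theorem lemma1 (k : fieldType) (I : Type) (le : I -> I -> Prop)
  (A : I -> comAlgType k) (f : forall i j, le i j -> A i -> A j)
  (B : comAlgType k) (phi : forall i, A i -> B) :
  directed le ->
  dir_system f ->
  (forall i, spec_irreducible (A i)) ->
  (forall i, finite_type (A i)) ->
  is_colimit f phi ->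
  spec_irreducible B ->
  red_finite_type B ->
  (forall i, same_dim B (A i)) ->
  exists J : I -> Prop,
    (forall i, exists j, J j /\ le i j) /\
    (forall j, J j -> red_iso (phi j)).
Proof.
move=> le_dir _ A_irr A_ft phi_colim _ B_redft dimBA.
have [i0 phi_surj] := colimit_red_surj le_dir phi_colim B_redft.
exists (le i0); split.
  move=> i; have [_ [_ [_ le_ub]]] := le_dir; have [j [ij i0j]] := le_ub i i0.
  by exists j.
move=> j i0j; split; first exact: phi_surj.
exact: red_inj_of_same_dim (colimit_kmorph phi_colim j) (A_irr j) (A_ft j)
  (dimBA j) (phi_surj j i0j).
Qed.
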